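(* Let $n = M\times N\ge 2$ and let $m_1, m_2$ be positive integers. Let $\sigma_0,\sigma_1,\sigma_2$ be arbitrary permutations of $\{1,2,\ldots,n\}$ (these are the inverse pre-, mid- and post-permutations $f_{S0}^{-1}, f_{S1}^{-1}, f_{S2}^{-1}$ of a five-stage permutation–diffusion–permutation–diffusion–permutation cipher). For each plaintext position $k\in\{1,\ldots,n\}$ define the associated set of ciphertext positions $$A_k=\bigl\{\sigma_2\bigl(\sigma_1(\sigma_0(k)-i)-j\bigr)\;:\;0\le i\le m_1,\ 0\le j\le m_2,\ \sigma_0(k)-i\ge 1,\ \sigma_1(\sigma_0(k)-i)-j\ge 1\bigr\}.$$ Then the family $\{A_k\}_{k=1}^{n}$ contains a complete chain of length $n$: there is an ordering $k_1,k_2,\ldots,k_n$ of $\{1,\ldots,n\}$ (i.e. a bijection $t\mapsto k_t$) such that $A_{k_t}\cap A_{k_{t+1}}\neq\emptyset$ for every $t=1,\ldots,n-1$, and for every $t\le n-1$ every element of $A_{k_t}$ belongs to $A_{k_{t-1}}\cap A_{k_t}$ (when $t\ge 2$) or to $A_{k_t}\cap A_{k_{t+1}}$.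
   Context: This formalizes the paper's ''associated position expression'' for a five-stage plaintext non-delayed chaotic cipher: decryption is $P(k)=f_{D1}^{-1}(\ldots)$ in which plaintext pixel $P(k)$ depends exactly on the ciphertext pixels $C(p)$ with $p\in A_k$ (positions $\le 0$ correspond to fixed initial conditions and are not ciphertext pixels, hence are excluded). A chain is a sequence of sets (nodes) in which every two adjacent sets have nonempty intersection; the first node is the chain head and the last the chain tail. A complete chain of length $n$ is a chain that uses all $n$ sets, in which every element of every node other than the tail lies in the intersection of that node with an adjacent node. *)

From mathcomp Require Import all_boot all_fingroup.
Set Implicit Arguments. Unset Strict Implicit. Unset Printing Implicit Defensive.

(* Positions {1,...,n} are represented 0-based by 'I_n (position p <-> ordinal p-1). *)

(* Associated position set A_k.  x \in A_k iff there are positions a, b with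
   a = sigma0(k) - i, 0 <= i <= m1, b = sigma1(a) - j, 0 <= j <= m2, x = sigma2(b).
   Since a, b are ordinals, the conditions sigma0(k)-i >= 1 and
   sigma1(sigma0(k)-i)-j >= 1 are built in. *)
Definition assoc_set (n m1 m2 : nat) (s0 s1 s2 : {perm 'I_n}) (k : 'I_n) : {set 'I_n} :=
  [set x : 'I_n | [exists a : 'I_n, exists b : 'I_n,
     [&& (val a <= val (s0 k) <= val a + m1),
         (val b <= val (s1 a) <= val b + m2) & x == s2 b]]].

Definition is_chain (T : finType) (c : seq {set T}) : Prop :=
  forall t, t.+1 < size c -> nth set0 c t :&: nth set0 c t.+1 != set0.

Definition is_complete_chain (T : finType) (c : seq {set T}) : Prop :=
  is_chain c /\
  forall t, t.+1 < size c -> forall x, x \in nth set0 c t ->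
    (0 < t /\ x \in nth set0 c t.-1 :&: nth set0 c t)
    \/ x \in nth set0 c t :&: nth set0 c t.+1.

From mathcomp Require Import all_boot all_fingroup zify.
Set Implicit Arguments. Unset Strict Implicit. Unset Printing Implicit Defensive.

(* Order the plaintext positions by their pre-permuted position t = s0 k.  The
   set A_k is then a sliding-window union over t - m1 <= a <= t of the sets C a
   reached through a, and C t is shared by the windows at t and t + 1.  An
   element of A_k coming from a < t is also in the window at t - 1, while one
   coming from a = t is also in the window at t + 1 because m1 > 0. *)

Section SlidingWindow.

Variables (T : finType) (n m : nat) (C : 'I_n -> {set T}).

Definition window_union (t : nat) : {set T} :=
  \bigcup_(a : 'I_n | a <= t <= a + m) C a.

Lemma window_unionW (a : 'I_n) t x :
  a <= t <= a + m -> x \in C a -> x \in window_union t.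
Proof. by move=> win_a Cx; apply/bigcupP; exists a. Qed.

Hypotheses (m_gt0 : 0 < m) (C_neq0 : forall a, C a != set0).

Lemma window_union_complete_chain :
  is_complete_chain [seq window_union t | t <- iota 0 n].
Proof.
have nth_window t : t < n ->
    nth set0 [seq window_union t | t <- iota 0 n] t = window_union t.
  by move=> lt_tn; rewrite (nth_map 0) ?size_iota // nth_iota.
rewrite /is_complete_chain /is_chain size_map size_iota; split=> [t lt_t1n | t lt_t1n x].
  have lt_tn : t < n := ltnW lt_t1n.
  have [x Cx] := set0Pn _ (C_neq0 (Ordinal lt_tn)).
  rewrite !nth_window //; apply/set0Pn; exists x.
  by rewrite inE !(window_unionW _ Cx) //=; lia.
rewrite nth_window; last lia.
move=> /bigcupP[a /andP[le_at le_tam] Cx].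
have [lt_at | ge_at] := ltnP a t.
  left; split; first lia.
  rewrite nth_window; last lia.
  by rewrite inE !(window_unionW _ Cx) //; lia.
right; rewrite nth_window // inE.
by rewrite !(window_unionW _ Cx) //; lia.
Qed.

End SlidingWindow.

Lemma assoc_set_window_union n m1 m2 (s0 s1 s2 : {perm 'I_n}) k :
  assoc_set m1 m2 s0 s1 s2 k =
  window_union m1 (fun a => s2 @: [set b : 'I_n | b <= s1 a <= b + m2]) (s0 k).
Proof.
apply/setP=> x; rewrite inE; apply/existsP/bigcupP.
  case=> a /existsP[b /and3P[win_a win_b /eqP->]].
  by exists a => //; rewrite imset_f // inE.
case=> a win_a /imsetP[b]; rewrite inE => win_b ->.
by exists a; apply/existsP; exists b; rewrite win_a win_b eqxx.
Qed.

Lemma perm_map_enum (T : finType) (f : {perm T}) :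
  perm_eq [seq f i | i <- enum T] (enum T).
Proof.
apply: uniq_perm.
- by rewrite (map_inj_uniq (@perm_inj _ f)) enum_uniq.
- exact: enum_uniq.
- move=> y; rewrite mem_enum; apply/mapP.
  by exists (f^-1 y)%g; rewrite ?mem_enum ?permKV.
Qed.

Theorem theorem1 (M N n m1 m2 : nat) (s0 s1 s2 : {perm 'I_n}) :
  n = M * N -> 2 <= n -> 0 < m1 -> 0 < m2 ->
  exists ks : seq 'I_n,
    perm_eq ks (enum 'I_n) /\
    is_complete_chain [seq assoc_set m1 m2 s0 s1 s2 k | k <- ks].
Proof.
move=> _ _ m1_gt0 _.
exists [seq (s0^-1)%g t | t <- enum 'I_n]; split; first exact: perm_map_enum.
set C := fun a : 'I_n => s2 @: [set b : 'I_n | b <= s1 a <= b + m2].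
have C_neq0 a : C a != set0.
  by apply/set0Pn; exists (s2 (s1 a)); rewrite imset_f // inE leqnn leq_addr.
suff -> : [seq assoc_set m1 m2 s0 s1 s2 k | k <- [seq (s0^-1)%g t | t <- enum 'I_n]]
          = [seq window_union m1 C t | t <- iota 0 n].
  exact: window_union_complete_chain.
rewrite -val_enum_ord -!map_comp; apply: eq_map => t /=.
by rewrite assoc_set_window_union permKV.
Qed.
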